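(* Let $G$ be a non-trivial graph with $m$ edges. Then $$ H(\mathcal{L}(G)) \leq \frac{m}{2} , $$ with equality if and only if each connected component of $G$ is regular or biregular.
   Context: All graphs are finite and simple. A graph is non-trivial if each of its connected components has at least two edges. $d_u$ is the degree of $u$. The harmonic index is $H(G)=\sum_{uv\in E(G)}\frac{2}{d_u+d_v}$. The line graph $\mathcal{L}(G)$ has vertex set $E(G)$, two vertices being adjacent iff the corresponding edges share an end vertex in $G$. A graph is biregular if it is bipartite and all vertices in the same part of the bipartition have the same degree. *)

(* A simple graph is a symmetric irreflexive relation on a finType. *)
From HB Require Import structures.
From mathcomp Require Import all_boot all_order all_algebra.
Set Implicit Arguments. Unset Strict Implicit. Unset Printing Implicit Defensive.
Import Order.TTheory GRing.Theory Num.Theory.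

Section Graphs.
Variable V : finType.
Variable r : rel V.

Definition deg (x : V) : nat := #|[set y | r x y]|.

Definition edges : {set {set V}} :=
  [set [set x; y] | x in V, y in V & r x y].

Definition gcomp (x : V) : {set V} := [set y | connect r x y].

Definition comp_edges (x : V) : {set {set V}} :=
  [set S in edges | S \subset gcomp x].

Definition nontrivial : Prop := forall x : V, 2 <= #|comp_edges x|.

Definition regular_on (C : {set V}) : Prop :=
  exists k : nat, forall y, y \in C -> deg y = k.

Definition biregular_on (C : {set V}) : Prop :=
  exists (A B : {set V}) (k1 k2 : nat),
    [/\ A :|: B = C, A :&: B = set0,
        (forall y z, y \in C -> z \in C -> r y z ->
             (y \in A) && (z \in B) || (y \in B) && (z \in A)),
        (forall y, y \in A -> deg y = k1) &
        (forall y, y \in B -> deg y = k2)].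

End Graphs.

Definition harmonic (R : fieldType) (V : finType) (r : rel V) : R :=
  (\sum_(S in edges r) 2 / (\sum_(x in S) deg r x)%N%:R)%R.

Definition ledge (V : finType) (r : rel V) := {S : {set V} | S \in edges r}.

Definition linegraph (V : finType) (r : rel V) : rel (ledge r) :=
  fun A B => (val A != val B) && (val A :&: val B != set0).
Arguments linegraph {V} r.
Arguments harmonic R {V} r.

(* On an edge uv of a graph without isolated vertices,
     1/(2 d_u) + 1/(2 d_v) - 2/(d_u + d_v) = (d_u - d_v)^2 / (2 d_u d_v (d_u + d_v)) >= 0,
   while the first two terms, summed over all edges, contribute 1/2 per vertex.
   Hence H <= n/2, with equality iff adjacent vertices have equal degrees.
   Apply this to L(G): its m vertices are the edges of G, the edge uv has degree
   d_u + d_v - 2 in it, and it has no isolated vertex since every component of G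
   has two edges. Equality then means that any two neighbours of a vertex have
   the same degree, so along every walk the degrees alternate between two values
   k and l: the component is regular if k = l, and biregular (split by degree)
   otherwise. *)

From HB Require Import structures.
From mathcomp Require Import all_boot all_order all_algebra.
From mathcomp Require Import ring zify.
Import Order.TTheory GRing.Theory Num.Theory.
Set Implicit Arguments. Unset Strict Implicit. Unset Printing Implicit Defensive.

Section Graph.
Variables (V : finType) (r : rel V).
Hypotheses (r_sym : symmetric r) (r_irr : irreflexive r).

Lemma edgesP S : reflect (exists x y, r x y /\ S = [set x; y]) (S \in edges r).
Proof.
apply: (iffP imset2P) => [[x y _]|[x [y [rxy ->]]]].
  by rewrite inE => /andP[_ rxy] ->; exists x, y.
by exists x y; rewrite ?inE ?rxy.
Qed.

Lemma mem_edges x y : r x y -> [set x; y] \in edges r.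
Proof. by move=> rxy; apply/edgesP; exists x, y. Qed.

Lemma adj_neq x y : r x y -> x != y.
Proof. by apply: contraTneq => ->; rewrite r_irr. Qed.

Lemma card_edge S : S \in edges r -> #|S| = 2.
Proof. by case/edgesP=> x [y [rxy ->]]; rewrite cards2 adj_neq. Qed.

Lemma edge_sub_pair S x y : S \in edges r -> S \subset [set x; y] -> S = [set x; y].
Proof.
move=> Se sub; apply/eqP; rewrite eqEcard sub (card_edge Se) cards2.
by case: (x != y).
Qed.

Lemma edge_pair S x y : S \in edges r -> x \in S -> y \in S -> x != y ->
  S = [set x; y].
Proof.
move=> Se xS yS xy; apply/esym/eqP.
by rewrite eqEcard subUset !sub1set xS yS (card_edge Se) cards2 xy.
Qed.

Lemma edge_at S x : S \in edges r -> x \in S -> exists2 y, r x y & S = [set x; y].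
Proof.
case/edgesP=> a [b [rab ->]]; rewrite !inE => /orP[]/eqP->; first by exists b.
by exists a; rewrite 1?r_sym // setUC.
Qed.

Lemma deg_gt0 x y : r x y -> 0 < deg r x.
Proof. by move=> rxy; rewrite card_gt0; apply/set0Pn; exists y; rewrite inE. Qed.

Definition star x := [set S in edges r | x \in S].

Lemma star_imset x : star x = (fun y => [set x; y]) @: [set y | r x y].
Proof.
apply/setP => S; rewrite inE; apply/andP/imsetP => [[Se xS]|[y]].
  by have [y rxy ->] := edge_at Se xS; exists y; rewrite ?inE.
by rewrite inE => rxy ->; rewrite mem_edges // set21.
Qed.

Lemma card_star x : #|star x| = deg r x.
Proof.
rewrite star_imset card_in_imset // => y z; rewrite !inE => rxy rxz eq_xyz.
have : y \in [set x; z] by rewrite -eq_xyz set22.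
by rewrite !inE => /orP[/eqP yx|/eqP //]; move: rxy; rewrite yx r_irr.
Qed.

Lemma star_setI x y : r x y -> star x :&: star y = [set [set x; y]].
Proof.
move=> rxy; apply/setP => S; rewrite !inE; apply/idP/eqP => [|->].
  by case/andP=> /andP[Se xS] /andP[_ yS]; apply: edge_pair; rewrite ?adj_neq.
by rewrite mem_edges // set21 set22.
Qed.

Lemma sum_edges_ends (M : nmodType) (F : V -> M) :
  (\sum_(S in edges r) \sum_(x in S) F x = \sum_x F x *+ deg r x)%R.
Proof.
rewrite (exchange_big_dep xpredT) //=; apply: eq_bigr => x _.
by rewrite -card_star -sumr_const; apply: eq_bigl => S; rewrite inE.
Qed.

Definition nbr_deg_const : Prop :=
  forall x y z, r y x -> r y z -> deg r x = deg r z.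

End Graph.

Section HarmonicBound.
Variables (R : realFieldType) (V : finType) (r : rel V).
Hypotheses (r_sym : symmetric r) (r_irr : irreflexive r).
Hypothesis no_isolated : forall x, (0 < deg r x)%N.
Local Open Scope ring_scope.

Lemma harmonic_gap (a b : R) : 0 < a -> 0 < b ->
  (2 * a)^-1 + (2 * b)^-1 - 2 / (a + b) = (a - b) ^+ 2 / (2 * a * b * (a + b)).
Proof. by move=> a_gt0 b_gt0; field; rewrite !lt0r_neq0 ?addr_gt0. Qed.

Definition harmonic_defect (S : {set V}) : R :=
  \sum_(x in S) (2 * (deg r x)%:R)^-1 - 2 / (\sum_(x in S) deg r x)%N%:R.

Lemma harmonic_defect_pair x y : r x y ->
  harmonic_defect [set x; y] = ((deg r x)%:R - (deg r y)%:R) ^+ 2 /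
    (2 * (deg r x)%:R * (deg r y)%:R * ((deg r x)%:R + (deg r y)%:R)).
Proof.
move=> rxy; have xy := adj_neq r_irr rxy.
rewrite /harmonic_defect !big_setU1 ?big_set1 ?inE //= natrD.
by rewrite harmonic_gap // ltr0n.
Qed.

Lemma harmonic_defect_ge0 S : S \in edges r -> 0 <= harmonic_defect S.
Proof.
case/edgesP=> x [y [rxy ->]]; rewrite harmonic_defect_pair //.
have dx_gt0 : 0 < (deg r x)%:R :> R by rewrite ltr0n.
have dy_gt0 : 0 < (deg r y)%:R :> R by rewrite ltr0n.
by rewrite divr_ge0 ?sqr_ge0 // !mulr_ge0 ?ltW ?addr_gt0.
Qed.

Lemma harmonic_defect_eq0 x y : r x y ->
  (harmonic_defect [set x; y] == 0) = (deg r x == deg r y).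
Proof.
move=> rxy; rewrite harmonic_defect_pair // mulf_eq0 invr_eq0 sqrf_eq0.
rewrite subr_eq0 eqr_nat !mulf_eq0 -natrD !pnatr_eq0.
by rewrite !eqn0Ngt addn_gt0 !no_isolated /= !orbF.
Qed.

Lemma harmonicE : harmonic R r = #|V|%:R / 2 - \sum_(S in edges r) harmonic_defect S.
Proof.
have half_per_vertex : \sum_(S in edges r) \sum_(x in S) (2 * (deg r x)%:R)^-1
    = #|V|%:R / 2 :> R.
  rewrite sum_edges_ends // -sum1_card natr_sum mulr_suml; apply: eq_bigr => x _.
  have dx_neq0 : (deg r x)%:R != 0 :> R by rewrite pnatr_eq0 -lt0n no_isolated.
  by rewrite -[_ *+ deg r x]mulr_natr invfM -mulrA mulVf ?mulr1 ?mul1r.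
by rewrite /harmonic_defect sumrB half_per_vertex opprB addrC subrK.
Qed.

Lemma harmonic_le : harmonic R r <= #|V|%:R / 2.
Proof.
by rewrite harmonicE gerDl oppr_le0 sumr_ge0 // => S; apply: harmonic_defect_ge0.
Qed.

Lemma harmonic_eqP : harmonic R r = #|V|%:R / 2 <->
  (forall x y, r x y -> deg r x = deg r y).
Proof.
rewrite harmonicE; split => [/eqP | balanced].
  rewrite -subr_eq0 addrAC subrr add0r oppr_eq0 => /eqP/psumr_eq0P defect0 x y rxy.
  apply/eqP; rewrite -harmonic_defect_eq0 //; apply/eqP.
  by apply: defect0 (mem_edges rxy) => S; apply: harmonic_defect_ge0.
rewrite big1 ?subr0 // => S /edgesP [x [y [rxy ->]]].
by apply/eqP; rewrite harmonic_defect_eq0 // (balanced _ _ rxy).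
Qed.

End HarmonicBound.

Section LineGraph.
Variables (V : finType) (r : rel V).
Hypotheses (r_sym : symmetric r) (r_irr : irreflexive r).

Lemma linegraph_sym : symmetric (linegraph r).
Proof. by move=> A B; rewrite /linegraph eq_sym setIC. Qed.

Lemma linegraph_irr : irreflexive (linegraph r).
Proof. by move=> A; rewrite /linegraph eqxx. Qed.

Lemma card_ledge : #|{: ledge r}| = #|edges r|.
Proof. by rewrite card_sig; apply: eq_card. Qed.

Definition ledge_of x y (rxy : r x y) : ledge r := exist _ [set x; y] (mem_edges rxy).

Lemma linegraph_nbrs (e : ledge r) x y : r x y -> val e = [set x; y] ->
  val @: [set f | linegraph r e f] = (star r x :|: star r y) :\ [set x; y].
Proof.
move=> rxy ex; apply/setP => S; rewrite in_setD1 in_setU !inE.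
apply/imsetP/idP => [[f] | /andP[neS /orP[]/andP[Se inS]]].
- rewrite inE /linegraph ex => /andP[nef /set0Pn [z zin]] ->.
  move: zin; rewrite eq_sym nef (valP f) !inE => /andP[/orP[]/eqP-> ->] //.
  by rewrite orbT.
- exists (exist _ S Se : ledge r) => //; rewrite inE /linegraph /= ex eq_sym neS.
  by apply/set0Pn; exists x; rewrite !inE eqxx.
- exists (exist _ S Se : ledge r) => //; rewrite inE /linegraph /= ex eq_sym neS.
  by apply/set0Pn; exists y; rewrite !inE eqxx orbT.
Qed.

Lemma deg_linegraph (e : ledge r) x y : r x y -> val e = [set x; y] ->
  deg (linegraph r) e = (deg r x + deg r y - 2)%N.
Proof.
move=> rxy ex; rewrite [LHS]/deg -(card_imset _ val_inj) (linegraph_nbrs rxy ex).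
have e_star : [set x; y] \in star r x :|: star r y.
  by rewrite inE inE mem_edges // set21.
have := cardsD1 [set x; y] (star r x :|: star r y).
rewrite e_star /= cardsU star_setI // cards1 !card_star //.
have := deg_gt0 rxy.
by move: (deg r x) (deg r y) #|_ :\ _| => dx dy n; lia.
Qed.

Lemma deg_ledge_of x y (rxy : r x y) :
  deg (linegraph r) (ledge_of rxy) = (deg r x + deg r y - 2)%N.
Proof. exact: deg_linegraph. Qed.

Lemma deg_le1_adj x y z : (deg r x <= 1)%N -> r x y -> r x z -> z = y.
Proof.
move=> dx rxy rxz; apply/eqP; apply: contraTT dx => zy; rewrite -ltnNge.
rewrite /deg (cardsD1 y) inE rxy ltnS card_gt0.
by apply/set0Pn; exists z; rewrite !inE zy.
Qed.

Lemma closed_pair_deg_le1 x y : r x y -> (deg r x <= 1)%N -> (deg r y <= 1)%N ->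
  closed r [set x; y].
Proof.
move=> rxy dx dy; apply: intro_closed; first exact: sym_connect_sym.
move=> u v ruv; rewrite !inE => /orP[]/eqP uE; rewrite uE in ruv.
- by rewrite (deg_le1_adj dx rxy ruv) eqxx orbT.
- by rewrite (deg_le1_adj dy (etrans (r_sym _ _) rxy) ruv) eqxx.
Qed.

Lemma linegraph_deg_gt0 : nontrivial r -> forall e : ledge r, (0 < deg (linegraph r) e)%N.
Proof.
move=> nt e; have [x [y [rxy ex]]] := edgesP r _ (valP e).
rewrite (deg_linegraph rxy ex).
have := deg_gt0 rxy; have := deg_gt0 (etrans (r_sym _ _) rxy).
case: (ltnP 1 (deg r x)) (ltnP 1 (deg r y)) => [|dx [|dy]]; try lia.
(* Otherwise the edge xy is a whole component of G. *)
have comp_sub : gcomp r x \subset [set x; y].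
  apply/subsetP => z; rewrite inE => /(closed_connect (closed_pair_deg_le1 rxy dx dy)).
  by rewrite set21 => <-.
have : comp_edges r x \subset [set [set x; y]].
  apply/subsetP => S; rewrite !inE => /andP[Se Sx]; apply/eqP.
  exact: edge_sub_pair Se (subset_trans Sx comp_sub).
by move/subset_leq_card; rewrite cards1 => /(leq_trans (nt x)).
Qed.

Lemma linegraph_balancedP :
  (forall e f, linegraph r e f -> deg (linegraph r) e = deg (linegraph r) f) <->
  nbr_deg_const r.
Proof.
split=> [balanced x y z ryx ryz | nbr_const e f /andP[_ /set0Pn [y]]].
  have [-> // | xz] := eqVneq x z.
  have adj : linegraph r (ledge_of ryx) (ledge_of ryz).
    apply/andP; split; last by apply/set0Pn; exists y; rewrite !inE eqxx.
    apply: contraNneq xz => /= exz.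
    by move: (set22 y x); rewrite exz !inE eq_sym (negbTE (adj_neq r_irr ryx)).
  have := balanced _ _ adj; rewrite !deg_ledge_of.
  have := deg_gt0 ryx; have := deg_gt0 (etrans (r_sym _ _) ryx).
  have := deg_gt0 (etrans (r_sym _ _) ryz).
  by move: (deg r x) (deg r y) (deg r z) => dx dy dz; lia.
rewrite inE => /andP[ye yf].
have [x ryx ex] := edge_at r_sym (valP e) ye.
have [z ryz fz] := edge_at r_sym (valP f) yf.
by rewrite (deg_linegraph ryx ex) (deg_linegraph ryz fz) (nbr_const x y z).
Qed.

End LineGraph.

Section Components.
Variables (V : finType) (r : rel V).

Lemma biregular_on_nbr_deg C x y z : biregular_on r C ->
  x \in C -> y \in C -> z \in C -> r y x -> r y z -> deg r x = deg r z.
Proof.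
move=> [A [B [k1 [k2 [_ AB0 sides degA degB]]]]] xC yC zC ryx ryz.
have disj w : w \in A -> w \in B -> False.
  by move=> wA wB; have := in_set0 w; rewrite -AB0 inE wA wB.
case/orP: (sides _ _ yC xC ryx) => /andP[yS xS];
  case/orP: (sides _ _ yC zC ryz) => /andP[yS' zS].
- by rewrite !degB.
- by case: (disj y).
- by case: (disj y).
- by rewrite !degA.
Qed.

Lemma components_nbr_deg_const :
  (forall x, regular_on r (gcomp r x) \/ biregular_on r (gcomp r x)) ->
  nbr_deg_const r.
Proof.
move=> reg_bireg x y z ryx ryz.
have yC : y \in gcomp r y by rewrite inE connect0.
have nbrC w : r y w -> w \in gcomp r y by rewrite inE => /connect1.
case: (reg_bireg y) => [[k degk] | bireg]; first by rewrite !degk ?nbrC.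
exact: biregular_on_nbr_deg bireg (nbrC _ ryx) yC (nbrC _ ryz) ryx ryz.
Qed.

Hypotheses (r_sym : symmetric r) (nbr_const : nbr_deg_const r).

Definition deg_pattern y k l := deg r y = k /\ forall z, r y z -> deg r z = l.

Lemma deg_pattern_adj y z k l : deg_pattern y k l -> r y z -> deg_pattern z l k.
Proof.
move=> [degy degnbr] ryz; split; first exact: degnbr.
by move=> w rzw; rewrite (nbr_const rzw (etrans (r_sym _ _) ryz)).
Qed.

Lemma deg_pattern_connect x y k l : deg_pattern x k l -> connect r x y ->
  deg_pattern y k l \/ deg_pattern y l k.
Proof.
move=> px /connectP [p xp ->]; elim: p x k l px xp => [|z p IH] x k l px /=.
  by left.
case/andP=> rxz zp.
by case: (IH z l k (deg_pattern_adj px rxz) zp); [right | left].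
Qed.

Lemma deg_pattern_exists x : exists l, deg_pattern x (deg r x) l.
Proof.
case: (pickP (r x)) => [z rxz | no_nbr].
  by exists (deg r z); split=> // w rxw; apply: nbr_const rxw rxz.
by exists 0%N; split=> // w; rewrite no_nbr.
Qed.

Lemma nbr_deg_const_components x :
  regular_on r (gcomp r x) \/ biregular_on r (gcomp r x).
Proof.
have [l px] := deg_pattern_exists x; set k := deg r x in px.
have patC y : connect r x y -> deg_pattern y k l \/ deg_pattern y l k.
  exact: deg_pattern_connect.
have [kl | kl] := eqVneq k l.
  by left; exists k => y; rewrite inE => /patC[[]|[]]; rewrite kl.
right; exists [set y in gcomp r x | deg r y == k], [set y in gcomp r x | deg r y == l].
exists k, l; split.
- apply/setP => y; rewrite !inE; case: (boolP (connect r x y)) => //= xy.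
  by case: (patC y xy) => -[-> _]; rewrite eqxx ?orbT.
- apply/setP => y; rewrite !inE andbACA andbb.
  apply/negbTE/negP => /and3P[_ /eqP dk /eqP dl].
  by move: kl; rewrite -dk dl eqxx.
- move=> y z; rewrite !inE => xy xz ryz; rewrite xy xz /=.
  by case: (patC y xy) => -[-> degnbr]; rewrite (degnbr _ ryz) !eqxx ?orbT.
- by move=> y; rewrite inE => /andP[_ /eqP].
- by move=> y; rewrite inE => /andP[_ /eqP].
Qed.

End Components.

Local Open Scope ring_scope.

Theorem corollary3p2 (R : realFieldType) (V : finType) (r : rel V)
    (r_sym : symmetric r) (r_irr : irreflexive r) (r_nt : nontrivial r) :
  harmonic R (linegraph r) <= (#|edges r|)%:R / 2 /\
  (harmonic R (linegraph r) = (#|edges r|)%:R / 2 <->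
     (forall x : V, regular_on r (gcomp r x) \/ biregular_on r (gcomp r x))).
Proof.
have lg_no_isolated := linegraph_deg_gt0 r_sym r_irr r_nt.
have := harmonic_le R (@linegraph_sym V r) (@linegraph_irr V r) lg_no_isolated.
have := harmonic_eqP R (@linegraph_sym V r) (@linegraph_irr V r) lg_no_isolated.
rewrite card_ledge linegraph_balancedP // => -> ->; split=> //.
by split; [apply: nbr_deg_const_components | apply: components_nbr_deg_const].
Qed.
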